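(* Let $\Gamma$ be a finite multiset of formulas and $G$ a formula. If the sequent $\Gamma\longrightarrow G$ has an $\mathbf{I}$-proof in which (1) either no $\lor$-L rule is used, or no $\lor$-R and no $\exists$-R rules are used, and (2) either no $\exists$-L rule or no $\exists$-R rule is used, then $\Gamma\longrightarrow G$ has a uniform proof. Moreover, this characterization is tight: for each of the three combinations $\{\lor\text{-L},\exists\text{-R}\}$, $\{\lor\text{-L},\lor\text{-R}\}$, $\{\exists\text{-L},\exists\text{-R}\}$ there is a sequent with an $\mathbf{I}$-proof in which rules of both kinds in that combination are used, but which has no uniform proof.
   Context: Formulas are first-order formulas built from atomic formulas and the logical constants $\top$, $\bot$ (not counted as atomic) using $\land,\lor,\supset,\forall,\exists$; $\neg A$ abbreviates $A\supset\bot$; $B[t/x]$ is capture-avoiding substitution of term $t$ for free $x$ in $B$. A sequent $\Gamma\longrightarrow\Delta$ is a pair of finite multisets of formulas; $B,\Gamma$ denotes $\Gamma$ with an extra occurrence of $B$. A sequent is an axiom if $\top\in\Delta$ or some formula that is $\bot$ or atomic occurs in both $\Gamma$ and $\Delta$. Writing premises $\Rightarrow$ conclusion, the rules are all instances of: contr-L: $B,B,\Gamma\longrightarrow\Delta\Rightarrow B,\Gamma\longrightarrow\Delta$; contr-R: $\Gamma\longrightarrow\Delta,B,B\Rightarrow\Gamma\longrightarrow\Delta,B$; $\bot$-R: $\Gamma\longrightarrow\Delta,\bot\Rightarrow\Gamma\longrightarrow\Delta,D$; $\land$-L: $B,\Gamma\longrightarrow\Delta\Rightarrow B\land D,\Gamma\longrightarrow\Delta$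 and $D,\Gamma\longrightarrow\Delta\Rightarrow B\land D,\Gamma\longrightarrow\Delta$; $\lor$-L: $B,\Gamma\longrightarrow\Delta$ and $D,\Gamma\longrightarrow\Delta\Rightarrow B\lor D,\Gamma\longrightarrow\Delta$; $\land$-R: $\Gamma\longrightarrow\Delta,B$ and $\Gamma\longrightarrow\Delta,D\Rightarrow\Gamma\longrightarrow\Delta,B\land D$; $\lor$-R: $\Gamma\longrightarrow\Delta,B\Rightarrow\Gamma\longrightarrow\Delta,B\lor D$ and $\Gamma\longrightarrow\Delta,D\Rightarrow\Gamma\longrightarrow\Delta,B\lor D$; $\supset$-L: $\Gamma\longrightarrow\Delta,B$ and $D,\Gamma\longrightarrow\Theta\Rightarrow B\supset D,\Gamma\longrightarrow\Delta,\Theta$; $\supset$-R: $B,\Gamma\longrightarrow\Delta,D\Rightarrow\Gamma\longrightarrow\Delta,B\supset D$; $\forall$-L: $B[t/x],\Gamma\longrightarrow\Delta\Rightarrow\forall x B,\Gamma\longrightarrow\Delta$; $\exists$-R: $\Gamma\longrightarrow\Delta,B[t/x]\Rightarrow\Gamma\longrightarrow\Delta,\exists x B$ ($t$ any term); $\exists$-L: $B[c/x],\Gamma\longrightarrow\Delta\Rightarrow\exists x B,\Gamma\longrightarrow\Delta$; $\forall$-R: $\Gamma\longrightarrow\Delta,B[c/x]\Rightarrow\Gamma\longrightarrow\Delta,\forall x B$, where the constant $c$ does not occur in the conclusion. A $\mathbf{C}$-proof is a finite tree of sequents with axioms at the leaves, each internal node being the conclusion of a rule instance whose premises are its children. An $\mathbf{I}$-proof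 is a $\mathbf{C}$-proof in which every sequent has exactly one formula in its succedent. A uniform proof ($\mathbf{O}$-proof) is an $\mathbf{I}$-proof in which any sequent that has a non-atomic formula distinct from $\bot$ in its succedent occurs only as the conclusion of an inference rule that introduces the top-level logical symbol of that formula. A rule ''is used'' if some instance of that schema occurs in the proof. *)

From Stdlib Require Import List Permutation Arith.
Import ListNotations.

(* ---------- Terms and formulas (locally nameless) ----------
   Bound variables are de Bruijn indices [TVar n]; free individual symbols
   (constants, function symbols) are [TFun f args]; a constant is [TFun c []]. *)
Inductive term : Type :=
| TVar : nat -> term
| TFun : nat -> list term -> term.

Inductive form : Type :=
| Atom : nat -> list term -> form
| Top : form
| Bot : form
| And : form -> form -> form
| Or : form -> form -> form
| Imp : form -> form -> form
| All : form -> form      (* binds de Bruijn index 0 *)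
| Ex : form -> form.

Definition Neg (A : form) : form := Imp A Bot.

Definition is_atom (A : form) : Prop :=
  match A with Atom _ _ => True | _ => False end.

Fixpoint closed_term (u : term) : Prop :=
  match u with
  | TVar _ => False
  | TFun _ l => fold_right and True (map closed_term l)
  end.

Fixpoint lc_term (k : nat) (u : term) : Prop :=
  match u with
  | TVar n => n < k
  | TFun _ l => fold_right and True (map (lc_term k) l)
  end.

Fixpoint lc_form (k : nat) (A : form) : Prop :=
  match A with
  | Atom _ l => fold_right and True (map (lc_term k) l)
  | Top | Bot => True
  | And B D | Or B D | Imp B D => lc_form k B /\ lc_form k D
  | All B | Ex B => lc_form (S k) B
  end.

Definition wf_form (A : form) : Prop := lc_form 0 A.

Fixpoint open_term (k : nat) (t : term) (u : term) : term :=
  match u with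
  | TVar n => if Nat.eqb n k then t else TVar n
  | TFun f l => TFun f (map (open_term k t) l)
  end.

Fixpoint open_form (k : nat) (t : term) (A : form) : form :=
  match A with
  | Atom p l => Atom p (map (open_term k t) l)
  | Top => Top
  | Bot => Bot
  | And B D => And (open_form k t B) (open_form k t D)
  | Or B D => Or (open_form k t B) (open_form k t D)
  | Imp B D => Imp (open_form k t B) (open_form k t D)
  | All B => All (open_form (S k) t B)
  | Ex B => Ex (open_form (S k) t B)
  end.

Definition inst (B : form) (t : term) : form := open_form 0 t B.

Fixpoint occ_term (c : nat) (u : term) : Prop :=
  match u with
  | TVar _ => False
  | TFun f l => f = c \/ fold_right or False (map (occ_term c) l)
  end.

Fixpoint occ_form (c : nat) (A : form) : Prop :=
  match A with
  | Atom _ l => fold_right or False (map (occ_term c) l)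
  | Top | Bot => False
  | And B D | Or B D | Imp B D => occ_form c B \/ occ_form c D
  | All B | Ex B => occ_form c B
  end.

(* ---------- Sequents (pairs of finite multisets, as lists up to permutation) ---------- *)
Definition sequent : Type := (list form * list form)%type.

Definition seq_eq (s1 s2 : sequent) : Prop :=
  Permutation (fst s1) (fst s2) /\ Permutation (snd s1) (snd s2).

Definition occ_seq (c : nat) (s : sequent) : Prop :=
  Exists (occ_form c) (fst s) \/ Exists (occ_form c) (snd s).

Definition axiom (s : sequent) : Prop :=
  In Top (snd s) \/
  exists A, (A = Bot \/ is_atom A) /\ In A (fst s) /\ In A (snd s).

Inductive rule_kind : Type :=
| RContrL | RContrR | RBotR | RAndL | ROrL | RAndR | ROrR
| RImpL | RImpR | RAllL | RExR | RExL | RAllR.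

Definition step1 (k : rule_kind) (p c : sequent) : Prop :=
  match k with
  | RContrL => exists B G D, seq_eq p (B :: B :: G, D) /\ seq_eq c (B :: G, D)
  | RContrR => exists B G D, seq_eq p (G, B :: B :: D) /\ seq_eq c (G, B :: D)
  | RBotR => exists E G D, seq_eq p (G, Bot :: D) /\ seq_eq c (G, E :: D)
  | RAndL => exists B E G D,
      (seq_eq p (B :: G, D) \/ seq_eq p (E :: G, D)) /\ seq_eq c (And B E :: G, D)
  | ROrR => exists B E G D,
      (seq_eq p (G, B :: D) \/ seq_eq p (G, E :: D)) /\ seq_eq c (G, Or B E :: D)
  | RImpR => exists B E G D,
      seq_eq p (B :: G, E :: D) /\ seq_eq c (G, Imp B E :: D)
  | RAllL => exists B t G D, closed_term t /\
      seq_eq p (inst B t :: G, D) /\ seq_eq c (All B :: G, D)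
  | RExR => exists B t G D, closed_term t /\
      seq_eq p (G, inst B t :: D) /\ seq_eq c (G, Ex B :: D)
  | RExL => exists B cst G D, ~ occ_seq cst c /\
      seq_eq p (inst B (TFun cst []) :: G, D) /\ seq_eq c (Ex B :: G, D)
  | RAllR => exists B cst G D, ~ occ_seq cst c /\
      seq_eq p (G, inst B (TFun cst []) :: D) /\ seq_eq c (G, All B :: D)
  | _ => False
  end.

Definition step2 (k : rule_kind) (p1 p2 c : sequent) : Prop :=
  match k with
  | ROrL => exists B E G D,
      seq_eq p1 (B :: G, D) /\ seq_eq p2 (E :: G, D) /\ seq_eq c (Or B E :: G, D)
  | RAndR => exists B E G D,
      seq_eq p1 (G, B :: D) /\ seq_eq p2 (G, E :: D) /\ seq_eq c (G, And B E :: D)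
  | RImpL => exists B E G D T,
      seq_eq p1 (G, B :: D) /\ seq_eq p2 (E :: G, T) /\ seq_eq c (Imp B E :: G, D ++ T)
  | _ => False
  end.

Inductive ptree : Type :=
| Leaf : sequent -> ptree
| Un : rule_kind -> sequent -> ptree -> ptree
| Bin : rule_kind -> sequent -> ptree -> ptree -> ptree.

Definition root (p : ptree) : sequent :=
  match p with Leaf s => s | Un _ s _ => s | Bin _ s _ _ => s end.

Fixpoint C_proof (p : ptree) : Prop :=
  match p with
  | Leaf s => axiom s
  | Un k s q => step1 k (root q) s /\ C_proof q
  | Bin k s q1 q2 => step2 k (root q1) (root q2) s /\ C_proof q1 /\ C_proof q2
  end.

Fixpoint all_seqs (P : sequent -> Prop) (p : ptree) : Prop :=
  match p with
  | Leaf s => P s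
  | Un _ s q => P s /\ all_seqs P q
  | Bin _ s q1 q2 => P s /\ all_seqs P q1 /\ all_seqs P q2
  end.

Definition single_succ (s : sequent) : Prop := exists F, snd s = [F].

Definition I_proof (p : ptree) : Prop := C_proof p /\ all_seqs single_succ p.

(* uniformity condition at a node whose last rule is [r] (None for an axiom leaf):
   a non-atomic succedent formula distinct from Bot must be introduced by the rule
   for its top-level symbol (for Top, the only introduction is the axiom). *)
Definition uniform_ok (r : option rule_kind) (s : sequent) : Prop :=
  match snd s with
  | [F] =>
      match F with
      | Top => r = None
      | And _ _ => r = Some RAndR
      | Or _ _ => r = Some ROrR
      | Imp _ _ => r = Some RImpR
      | All _ => r = Some RAllR
      | Ex _ => r = Some RExR
      | _ => True
      end
  | _ => True
  end.

Fixpoint uniform_nodes (p : ptree) : Prop :=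
  match p with
  | Leaf s => uniform_ok None s
  | Un k s q => uniform_ok (Some k) s /\ uniform_nodes q
  | Bin k s q1 q2 => uniform_ok (Some k) s /\ uniform_nodes q1 /\ uniform_nodes q2
  end.

Definition O_proof (p : ptree) : Prop := I_proof p /\ uniform_nodes p.

Fixpoint uses (k : rule_kind) (p : ptree) : Prop :=
  match p with
  | Leaf _ => False
  | Un k' _ q => k' = k \/ uses k q
  | Bin k' _ q1 q2 => k' = k \/ uses k q1 \/ uses k q2
  end.

Definition has_I_proof_using (Gam : list form) (G : form) (k1 k2 : rule_kind) : Prop :=
  exists p, I_proof p /\ root p = (Gam, [G]) /\ uses k1 p /\ uses k2 p.

Definition has_uniform_proof (Gam : list form) (G : form) : Prop :=
  exists p, O_proof p /\ root p = (Gam, [G]).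

Definition tight_witness (k1 k2 : rule_kind) : Prop :=
  exists (Gam : list form) (G : form),
    Forall wf_form Gam /\ wf_form G /\
    has_I_proof_using Gam G k1 k2 /\ ~ has_uniform_proof Gam G.

(* Uniform provability is captured by the inductive calculus [uprov], whose
   left rules act only on atomic or bottom goals.  An I-proof is translated
   into it rule by rule: a left rule is admissible because it can be permuted
   above the right rules, which are invertible in [uprov].  This fails only for
   disjunction-L in the presence of disjunction-R or exists-R (its two premises
   may choose different disjuncts or witnesses) and for exists-L in the
   presence of exists-R (the witness may mention the eigenvariable).  Bottom-R
   on a compound goal is removed at the end, once all right rules are
   available.  For tightness, the only possible last rule of a uniform proof of
   each counterexample is a right rule whose premise is refuted by a valuation,
   or, for [exists x P x |- exists x P x], is [exists x P x |- P t], from which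
   [P t] never reaches the antecedent. *)

From Stdlib Require Import List Permutation Arith Lia Wf_nat Classical.
Import ListNotations.

Fixpoint term_ind_nested (P : term -> Prop) (HV : forall n, P (TVar n))
  (HF : forall f l, Forall P l -> P (TFun f l)) (u : term) {struct u} : P u :=
  match u with
  | TVar n => HV n
  | TFun f l => HF f l ((fix go (l : list term) : Forall P l :=
       match l with
       | [] => Forall_nil P
       | v :: r => Forall_cons v (term_ind_nested P HV HF v) (go r)
       end) l)
  end.

Lemma fold_and_Forall {A} (P : A -> Prop) l :
  fold_right and True (map P l) <-> Forall P l.
Proof.
  induction l; simpl; [split; auto|].
  rewrite Forall_cons_iff; tauto.
Qed.

Lemma fold_or_Exists {A} (P : A -> Prop) l :
  fold_right or False (map P l) <-> Exists P l.
Proof.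
  induction l; simpl; [split; [tauto|inversion 1]|].
  rewrite Exists_cons; tauto.
Qed.

Lemma map_id_in {A} (f : A -> A) l : (forall x, In x l -> f x = x) -> map f l = l.
Proof. intros H. rewrite <- (map_id l) at 2. now apply map_ext_in. Qed.

Definition cst (c : nat) : term := TFun c [].

(** * Symbols and fresh constants *)

Fixpoint term_syms (u : term) : list nat :=
  match u with
  | TVar _ => []
  | TFun f l => f :: flat_map term_syms l
  end.

Fixpoint form_syms (A : form) : list nat :=
  match A with
  | Atom _ l => flat_map term_syms l
  | Top | Bot => []
  | And B D | Or B D | Imp B D => form_syms B ++ form_syms D
  | All B | Ex B => form_syms B
  end.

Fixpoint ctx_syms (Gm : list form) : list nat :=
  match Gm with
  | [] => []
  | A :: Gm => form_syms A ++ ctx_syms Gm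
  end.

Lemma in_ctx_syms c Gm : In c (ctx_syms Gm) <-> exists A, In A Gm /\ In c (form_syms A).
Proof.
  induction Gm as [|A Gm IH]; simpl; [firstorder|].
  rewrite in_app_iff, IH. firstorder congruence.
Qed.

Lemma occ_term_syms c u : occ_term c u <-> In c (term_syms u).
Proof.
  induction u as [n|f l IH] using term_ind_nested; simpl; [tauto|].
  rewrite fold_or_Exists, Exists_exists, in_flat_map, Forall_forall in *.
  firstorder.
Qed.

Lemma occ_form_syms c A : occ_form c A <-> In c (form_syms A).
Proof.
  induction A; simpl; rewrite ?in_app_iff; try tauto.
  rewrite fold_or_Exists, Exists_exists, in_flat_map.
  setoid_rewrite occ_term_syms. tauto.
Qed.

Lemma occ_seq_syms c Gm Dl : occ_seq c (Gm, Dl) <-> In c (ctx_syms Gm ++ ctx_syms Dl).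
Proof.
  unfold occ_seq; simpl.
  rewrite in_app_iff, !Exists_exists, !in_ctx_syms.
  setoid_rewrite occ_form_syms. tauto.
Qed.

Lemma ctx_syms_perm Gm Gm' c :
  Permutation Gm Gm' -> In c (ctx_syms Gm) -> In c (ctx_syms Gm').
Proof. rewrite !in_ctx_syms. firstorder eauto using Permutation_in. Qed.

Lemma fresh_nat (L : list nat) : exists c, ~ In c L.
Proof.
  exists (S (list_max L)). intros Hin.
  assert (Hle : list_max L <= list_max L) by lia.
  apply list_max_le, Forall_forall with (x := S (list_max L)) in Hle; [lia|assumption].
Qed.

Lemma term_syms_open k t u y :
  In y (term_syms (open_term k t u)) -> In y (term_syms u) \/ In y (term_syms t).
Proof.
  induction u as [n|f l IH] using term_ind_nested; simpl.
  - destruct (Nat.eqb n k); simpl; tauto.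
  - rewrite Forall_forall in IH. rewrite !in_flat_map.
    intros [Hy|[v [Hv Hy]]]; [auto|].
    apply in_map_iff in Hv as [w [<- Hw]].
    destruct (IH w Hw Hy); eauto.
Qed.

Lemma form_syms_open A k t y :
  In y (form_syms (open_form k t A)) -> In y (form_syms A) \/ In y (term_syms t).
Proof.
  revert k; induction A; intros k; simpl; rewrite ?in_app_iff; try tauto; try apply IHA;
    try (intros [H|H]; [destruct (IHA1 k H)|destruct (IHA2 k H)]; tauto).
  rewrite !in_flat_map. intros [v [Hv Hy]].
  apply in_map_iff in Hv as [w [<- Hw]].
  destruct (term_syms_open _ _ _ _ Hy); eauto.
Qed.

Lemma form_syms_inst_cst B x y :
  In y (form_syms (inst B (cst x))) -> In y (form_syms B) \/ y = x.
Proof. intros H. destruct (form_syms_open _ _ _ _ H) as [H'|[H'|[]]]; auto. Qed.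

(** * Renaming constants *)

Definition swap_nat (c d x : nat) : nat :=
  if Nat.eqb x c then d else if Nat.eqb x d then c else x.

Lemma swap_nat_invol c d x : swap_nat c d (swap_nat c d x) = x.
Proof.
  unfold swap_nat.
  destruct (Nat.eqb_spec x c); [|destruct (Nat.eqb_spec x d)];
  repeat match goal with |- context [Nat.eqb ?a ?b] => destruct (Nat.eqb_spec a b) end; lia.
Qed.

Lemma swap_nat_l c d : swap_nat c d c = d.
Proof. unfold swap_nat. now rewrite Nat.eqb_refl. Qed.

Lemma swap_nat_id c d x : x <> c -> x <> d -> swap_nat c d x = x.
Proof.
  unfold swap_nat. intros. now destruct (Nat.eqb_spec x c), (Nat.eqb_spec x d).
Qed.

Fixpoint swap_term (c d : nat) (u : term) : term :=
  match u with
  | TVar n => TVar n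
  | TFun f l => TFun (swap_nat c d f) (map (swap_term c d) l)
  end.

Fixpoint swap_form (c d : nat) (A : form) : form :=
  match A with
  | Atom p l => Atom p (map (swap_term c d) l)
  | Top => Top
  | Bot => Bot
  | And B E => And (swap_form c d B) (swap_form c d E)
  | Or B E => Or (swap_form c d B) (swap_form c d E)
  | Imp B E => Imp (swap_form c d B) (swap_form c d E)
  | All B => All (swap_form c d B)
  | Ex B => Ex (swap_form c d B)
  end.

Lemma swap_term_open c d k t u :
  swap_term c d (open_term k t u) = open_term k (swap_term c d t) (swap_term c d u).
Proof.
  induction u as [n|f l IH] using term_ind_nested; simpl.
  - now destruct (Nat.eqb n k).
  - f_equal. rewrite !map_map. apply map_ext_in.
    rewrite Forall_forall in IH. auto.
Qed.

Lemma swap_term_cst c d x : swap_term c d (cst x) = cst (swap_nat c d x).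
Proof. reflexivity. Qed.

Lemma swap_form_inst c d B t :
  swap_form c d (inst B t) = inst (swap_form c d B) (swap_term c d t).
Proof.
  unfold inst. generalize 0. induction B; intros k; simpl; f_equal; auto.
  rewrite !map_map. apply map_ext. intros; apply swap_term_open.
Qed.

Lemma closed_swap_term c d t : closed_term t -> closed_term (swap_term c d t).
Proof.
  induction t as [n|f l IH] using term_ind_nested; simpl; auto.
  rewrite !fold_and_Forall, Forall_map, !Forall_forall in *. auto.
Qed.

Lemma swap_term_fresh c d u :
  ~ In c (term_syms u) -> ~ In d (term_syms u) -> swap_term c d u = u.
Proof.
  induction u as [n|f l IH] using term_ind_nested; simpl; auto.
  rewrite Forall_forall in IH. rewrite !in_flat_map. intros Hc Hd.
  rewrite swap_nat_id by tauto. f_equal.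
  apply map_id_in. intros v Hv.
  apply IH; auto; intros H; [apply Hc|apply Hd]; eauto.
Qed.

Lemma swap_form_fresh c d A :
  ~ In c (form_syms A) -> ~ In d (form_syms A) -> swap_form c d A = A.
Proof.
  induction A; simpl; rewrite ?in_app_iff; intros Hc Hd; f_equal; auto.
  rewrite in_flat_map in *. apply map_id_in. intros v Hv.
  apply swap_term_fresh; intros H; [apply Hc|apply Hd]; eauto.
Qed.

Lemma swap_ctx_fresh c d Gm :
  ~ In c (ctx_syms Gm) -> ~ In d (ctx_syms Gm) -> map (swap_form c d) Gm = Gm.
Proof.
  induction Gm as [|A Gm IH]; simpl; auto. rewrite !in_app_iff. intros Hc Hd.
  f_equal; [apply swap_form_fresh|apply IH]; tauto.
Qed.

(** * The uniform calculus *)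

Definition atomic_or_bot (A : form) : Prop := A = Bot \/ is_atom A.

Lemma swap_form_atomic_or_bot c d A : atomic_or_bot A -> atomic_or_bot (swap_form c d A).
Proof. unfold atomic_or_bot. destruct A; simpl; intuition discriminate. Qed.

Section Uniform.

Variables orR exR botR : bool.

(* Left rules fire only on atomic or bottom goals and keep their principal
   formula, so weakening and contraction are built in.  The flags [orR] and
   [exR] switch on the right rules for disjunction and existence; [botR] lets
   bottom-R conclude arbitrary goals, which is not uniform. *)
Inductive uprov : list form -> form -> Prop :=
| up_top Gm : uprov Gm Top
| up_ax Gm A : atomic_or_bot A -> In A Gm -> uprov Gm A
| up_botR Gm A : botR = true \/ atomic_or_bot A -> uprov Gm Bot -> uprov Gm A
| up_andR Gm A B : uprov Gm A -> uprov Gm B -> uprov Gm (And A B)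
| up_orR1 Gm A B : orR = true -> uprov Gm A -> uprov Gm (Or A B)
| up_orR2 Gm A B : orR = true -> uprov Gm B -> uprov Gm (Or A B)
| up_impR Gm A B : uprov (A :: Gm) B -> uprov Gm (Imp A B)
| up_allR Gm B L :
    (forall x, ~ In x L -> uprov Gm (inst B (cst x))) -> uprov Gm (All B)
| up_exR Gm B t :
    exR = true -> closed_term t -> uprov Gm (inst B t) -> uprov Gm (Ex B)
| up_andL1 Gm A B G :
    atomic_or_bot G -> In (And A B) Gm -> uprov (A :: Gm) G -> uprov Gm G
| up_andL2 Gm A B G :
    atomic_or_bot G -> In (And A B) Gm -> uprov (B :: Gm) G -> uprov Gm G
| up_orL Gm A B G : atomic_or_bot G -> In (Or A B) Gm ->
    uprov (A :: Gm) G -> uprov (B :: Gm) G -> uprov Gm G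
| up_impL Gm A B G : atomic_or_bot G -> In (Imp A B) Gm ->
    uprov Gm A -> uprov (B :: Gm) G -> uprov Gm G
| up_allL Gm B t G : atomic_or_bot G -> In (All B) Gm -> closed_term t ->
    uprov (inst B t :: Gm) G -> uprov Gm G
| up_exL Gm B L G : atomic_or_bot G -> In (Ex B) Gm ->
    (forall x, ~ In x L -> uprov (inst B (cst x) :: Gm) G) -> uprov Gm G.

Lemma uprov_incl Gm G : uprov Gm G -> forall Gm', incl Gm Gm' -> uprov Gm' G.
Proof.
  assert (Hskip : forall (A : form) l l', incl l l' -> incl (A :: l) (A :: l'))
    by (intros A l l' H x [<-|Hx]; [left|right]; auto).
  induction 1; intros Gm' Hi.
  - apply up_top.
  - apply up_ax; auto.
  - apply up_botR; auto.
  - apply up_andR; auto.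
  - apply up_orR1; auto.
  - apply up_orR2; auto.
  - apply up_impR; auto.
  - apply up_allR with L; auto.
  - apply up_exR with t; auto.
  - apply up_andL1 with A B; auto.
  - apply up_andL2 with A B; auto.
  - apply up_orL with A B; auto.
  - apply up_impL with A B; auto.
  - apply up_allL with B t; auto.
  - apply up_exL with B L; auto. intros x Hx. apply (H2 x Hx); auto.
Qed.

Lemma uprov_swap c d Gm G :
  uprov Gm G -> uprov (map (swap_form c d) Gm) (swap_form c d G).
Proof.
  assert (HL : forall L x, ~ In x (map (swap_nat c d) L) -> ~ In (swap_nat c d x) L).
  { intros L x Hx Hin. apply Hx. rewrite <- (swap_nat_invol c d x). now apply in_map. }
  induction 1; simpl;
    try match goal with H : In _ Gm |- _ => apply (in_map (swap_form c d)) in H; simpl in H end.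
  - apply up_top.
  - apply up_ax; auto using swap_form_atomic_or_bot.
  - apply up_botR; auto. destruct H; auto using swap_form_atomic_or_bot.
  - now apply up_andR.
  - now apply up_orR1.
  - now apply up_orR2.
  - now apply up_impR.
  - apply up_allR with (map (swap_nat c d) L). intros x Hx.
    specialize (H0 _ (HL L x Hx)).
    now rewrite swap_form_inst, swap_term_cst, swap_nat_invol in H0.
  - apply up_exR with (swap_term c d t); auto using closed_swap_term.
    now rewrite <- swap_form_inst.
  - eapply up_andL1; eauto using swap_form_atomic_or_bot.
  - eapply up_andL2; eauto using swap_form_atomic_or_bot.
  - eapply up_orL; eauto using swap_form_atomic_or_bot.
  - eapply up_impL; eauto using swap_form_atomic_or_bot.
  - apply up_allL with (swap_form c d B) (swap_term c d t);
      auto using swap_form_atomic_or_bot, closed_swap_term.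
    now rewrite <- swap_form_inst.
  - apply up_exL with (swap_form c d B) (map (swap_nat c d) L);
      auto using swap_form_atomic_or_bot.
    intros x Hx. specialize (H2 _ (HL L x Hx)). simpl in H2.
    now rewrite swap_form_inst, swap_term_cst, swap_nat_invol in H2.
Qed.

End Uniform.

Lemma uprov_perm o e b Gm Gm' G :
  uprov o e b Gm G -> Permutation Gm Gm' -> uprov o e b Gm' G.
Proof.
  intros H HP. apply (uprov_incl _ _ _ _ _ H). intros A HA. now apply Permutation_in with Gm.
Qed.

Lemma uprov_weak o e b A Gm G : uprov o e b Gm G -> uprov o e b (A :: Gm) G.
Proof. intros H. apply (uprov_incl _ _ _ _ _ H). intros X HX. now right. Qed.

Lemma uprov_rename_hyp o e b B c x Gm G :
  ~ In c (ctx_syms (B :: G :: Gm)) -> ~ In x (ctx_syms (B :: G :: Gm)) ->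
  uprov o e b (inst B (cst c) :: Gm) G -> uprov o e b (inst B (cst x) :: Gm) G.
Proof.
  simpl; rewrite !in_app_iff. intros Hc Hx H.
  apply (uprov_swap _ _ _ c x) in H. simpl in H.
  rewrite swap_form_inst, swap_term_cst, swap_nat_l in H.
  rewrite swap_ctx_fresh, !swap_form_fresh in H; tauto.
Qed.

Lemma uprov_rename_goal o e b B c x Gm :
  ~ In c (ctx_syms (B :: Gm)) -> ~ In x (ctx_syms (B :: Gm)) ->
  uprov o e b Gm (inst B (cst c)) -> uprov o e b Gm (inst B (cst x)).
Proof.
  simpl; rewrite !in_app_iff. intros Hc Hx H.
  apply (uprov_swap _ _ _ c x) in H.
  rewrite swap_form_inst, swap_term_cst, swap_nat_l in H.
  rewrite swap_ctx_fresh, !swap_form_fresh in H; tauto.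
Qed.

Lemma uprov_exL_fresh o e b B c Gm G :
  atomic_or_bot G -> In (Ex B) Gm -> ~ In c (ctx_syms (B :: G :: Gm)) ->
  uprov o e b (inst B (cst c) :: Gm) G -> uprov o e b Gm G.
Proof.
  intros HG Hin Hc H. apply up_exL with B (c :: ctx_syms (B :: G :: Gm)); auto.
  intros x Hx. apply uprov_rename_hyp with c; auto. intros Hin'; apply Hx; now right.
Qed.

Lemma uprov_allR_fresh o e b B c Gm :
  ~ In c (ctx_syms (B :: Gm)) -> uprov o e b Gm (inst B (cst c)) -> uprov o e b Gm (All B).
Proof.
  intros Hc H. apply up_allR with (c :: ctx_syms (B :: Gm)).
  intros x Hx. apply uprov_rename_goal with c; auto. intros Hin'; apply Hx; now right.
Qed.

Lemma uprov_weak_mid o e b Dl A Gm G :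
  uprov o e b (Dl ++ Gm) G -> uprov o e b (Dl ++ A :: Gm) G.
Proof.
  intros H. apply (uprov_incl _ _ _ _ _ H). intros X. rewrite !in_app_iff. simpl. tauto.
Qed.

(** * Invertibility of the right rules *)

Ltac absurd_atomic :=
  match goal with
  | H : atomic_or_bot _ |- _ => destruct H as [H|H]; [discriminate H|simpl in H; contradiction]
  end.

Section Inversion.

Variables orR exR : bool.
Local Notation uprov := (uprov orR exR true).

Lemma uprov_inv_and Gm A B : uprov Gm (And A B) -> uprov Gm A /\ uprov Gm B.
Proof.
  inversion 1; subst; try absurd_atomic; auto.
  split; apply up_botR; auto.
Qed.

Lemma uprov_inv_imp Gm A B : uprov Gm (Imp A B) -> uprov (A :: Gm) B.
Proof.
  inversion 1; subst; try absurd_atomic; auto.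
  apply up_botR; auto. now apply uprov_weak.
Qed.

Lemma uprov_inv_all Gm B :
  uprov Gm (All B) -> exists L, forall x, ~ In x L -> uprov Gm (inst B (cst x)).
Proof.
  inversion 1; subst; try absurd_atomic; eauto.
  exists []. intros x _. apply up_botR; auto.
Qed.

Lemma uprov_inv_or Gm A B :
  uprov Gm (Or A B) -> uprov Gm Bot \/ (orR = true /\ (uprov Gm A \/ uprov Gm B)).
Proof. inversion 1; subst; try absurd_atomic; auto. Qed.

Lemma uprov_inv_ex Gm B :
  uprov Gm (Ex B) ->
  uprov Gm Bot \/ (exR = true /\ exists t, closed_term t /\ uprov Gm (inst B t)).
Proof. inversion 1; subst; try absurd_atomic; eauto 6. Qed.

End Inversion.

Record right_invertible (o e : bool) (P : list form -> form -> Prop) : Prop := {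
  rinv_and : forall Gm A B, P Gm (And A B) -> P Gm A /\ P Gm B;
  rinv_imp : forall Gm A B, P Gm (Imp A B) -> P (A :: Gm) B;
  rinv_all : forall Gm B, P Gm (All B) ->
    exists L, forall x, ~ In x L -> P Gm (inst B (cst x));
  rinv_or : forall Gm A B, P Gm (Or A B) ->
    P Gm Bot \/ (o = true /\ (P Gm A \/ P Gm B));
  rinv_ex : forall Gm B, P Gm (Ex B) ->
    P Gm Bot \/ (e = true /\ exists t, closed_term t /\ P Gm (inst B t))
}.

Fixpoint fsize (A : form) : nat :=
  match A with
  | And B E | Or B E | Imp B E => S (fsize B + fsize E)
  | All B | Ex B => S (fsize B)
  | _ => 1
  end.

Lemma fsize_inst B t : fsize (inst B t) = fsize B.
Proof. unfold inst. generalize 0. induction B; intros; simpl; auto. Qed.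

Lemma uprov_of_right_invertible o e (P : list form -> form -> Prop) :
  right_invertible o e P ->
  (forall Gm G, atomic_or_bot G -> P Gm G -> uprov o e true Gm G) ->
  forall Gm G, P Gm G -> uprov o e true Gm G.
Proof.
  intros [Hand Himp Hall Hor Hex] Hat Gm G. revert Gm.
  induction G as [G IH] using (induction_ltof1 _ fsize); unfold ltof in IH.
  intros Gm HP. destruct G.
  - apply Hat; [right; exact I|auto].
  - apply up_top.
  - apply Hat; [left|]; auto.
  - destruct (Hand _ _ _ HP). apply up_andR; apply IH; simpl; auto; lia.
  - destruct (Hor _ _ _ HP) as [HB|[Ho [HA|HA]]].
    + apply up_botR; auto. apply Hat; [left|]; auto.
    + apply up_orR1; auto. apply IH; simpl; auto; lia.
    + apply up_orR2; auto. apply IH; simpl; auto; lia.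
  - apply up_impR, IH; [simpl; lia|auto].
  - destruct (Hall _ _ HP) as [L HL]. apply up_allR with L. intros x Hx.
    apply IH; auto. rewrite fsize_inst; simpl; lia.
  - destruct (Hex _ _ HP) as [HB|[He [t [Ht HB]]]].
    + apply up_botR; auto. apply Hat; [left|]; auto.
    + apply up_exR with t; auto. apply IH; auto. rewrite fsize_inst; simpl; lia.
Qed.

Lemma right_invertible_ctx o e (Q : list form -> Prop) Dl :
  (forall A Gm, Q Gm -> Q (A :: Gm)) ->
  right_invertible o e (fun Gm G => Q Gm /\ uprov o e true (Dl ++ Gm) G).
Proof.
  intros HQ. split.
  - intros Gm A B [HG H]. apply uprov_inv_and in H. tauto.
  - intros Gm A B [HG H]. split; auto.
    apply (uprov_incl _ _ _ _ _ (uprov_inv_imp _ _ _ _ _ H)).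
    intros X. simpl. rewrite !in_app_iff. simpl. tauto.
  - intros Gm B [HG H]. destruct (uprov_inv_all _ _ _ _ H) as [L HL]. eauto.
  - intros Gm A B [HG H]. destruct (uprov_inv_or _ _ _ _ _ H); tauto.
  - intros Gm B [HG H].
    destruct (uprov_inv_ex _ _ _ _ H) as [?|[? [t [? ?]]]]; [left|right]; eauto.
Qed.

Lemma right_invertible_conj P1 P2 :
  right_invertible false false P1 -> right_invertible false false P2 ->
  right_invertible false false (fun Gm G => P1 Gm G /\ P2 Gm G).
Proof.
  intros [And1 Imp1 All1 Or1 Ex1] [And2 Imp2 All2 Or2 Ex2]. split.
  - intros Gm A B [H1 H2]. apply And1 in H1. apply And2 in H2. tauto.
  - intros Gm A B [H1 H2]. split; auto.
  - intros Gm B [H1 H2]. destruct (All1 _ _ H1) as [L1 HL1], (All2 _ _ H2) as [L2 HL2].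
    exists (L1 ++ L2). intros x Hx. rewrite in_app_iff in Hx. split; auto.
  - intros Gm A B [H1 H2]. apply Or1 in H1. apply Or2 in H2. left. intuition discriminate.
  - intros Gm B [H1 H2]. apply Ex1 in H1. apply Ex2 in H2. left. intuition discriminate.
Qed.

Lemma uprov_left_adm o e (Q : list form -> Prop) Dl Gm G :
  (forall A Gm, Q Gm -> Q (A :: Gm)) ->
  (forall Gm G, atomic_or_bot G -> Q Gm -> uprov o e true (Dl ++ Gm) G -> uprov o e true Gm G) ->
  Q Gm -> uprov o e true (Dl ++ Gm) G -> uprov o e true Gm G.
Proof.
  intros HQ Hat HG H.
  apply (uprov_of_right_invertible o e (fun Gm G => Q Gm /\ uprov o e true (Dl ++ Gm) G));
    auto using right_invertible_ctx.
  intros; apply Hat; tauto.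
Qed.

(** * Admissibility of the left rules *)

Lemma uprov_andL1_adm o e A B Gm G :
  uprov o e true (A :: Gm) G -> uprov o e true (And A B :: Gm) G.
Proof.
  intros H. apply (uprov_left_adm o e (In (And A B)) [A]).
  - intros; now right.
  - intros; now apply up_andL1 with A B.
  - now left.
  - now apply (uprov_weak_mid _ _ _ [A]).
Qed.

Lemma uprov_andL2_adm o e A B Gm G :
  uprov o e true (B :: Gm) G -> uprov o e true (And A B :: Gm) G.
Proof.
  intros H. apply (uprov_left_adm o e (In (And A B)) [B]).
  - intros; now right.
  - intros; now apply up_andL2 with A B.
  - now left.
  - now apply (uprov_weak_mid _ _ _ [B]).
Qed.

Lemma uprov_allL_adm o e B t Gm G :
  closed_term t -> uprov o e true (inst B t :: Gm) G -> uprov o e true (All B :: Gm) G.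
Proof.
  intros Ht H. apply (uprov_left_adm o e (In (All B)) [inst B t]).
  - intros; now right.
  - intros; now apply up_allL with B t.
  - now left.
  - now apply (uprov_weak_mid _ _ _ [inst B t]).
Qed.

Lemma uprov_impL_adm o e A B Gm G :
  uprov o e true Gm A -> uprov o e true (B :: Gm) G -> uprov o e true (Imp A B :: Gm) G.
Proof.
  intros HA HB.
  apply (uprov_left_adm o e (fun Gm => In (Imp A B) Gm /\ uprov o e true Gm A) [B]).
  - intros X Gm' [Hin H]. split; [now right|now apply uprov_weak].
  - intros Gm' G' HG [Hin H] H'. now apply up_impL with A B.
  - split; [now left|now apply uprov_weak].
  - now apply (uprov_weak_mid _ _ _ [B]).
Qed.

(* With both flags off every right rule is invertible, so the two premises
   decompose the goal in the same way. *)
Lemma uprov_orL_adm A B Gm G :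
  uprov false false true (A :: Gm) G -> uprov false false true (B :: Gm) G ->
  uprov false false true (Or A B :: Gm) G.
Proof.
  intros HA HB.
  apply (uprov_of_right_invertible false false (fun Gm G =>
    (In (Or A B) Gm /\ uprov false false true ([A] ++ Gm) G) /\
    (In (Or A B) Gm /\ uprov false false true ([B] ++ Gm) G))).
  - apply right_invertible_conj; apply right_invertible_ctx; intros; now right.
  - intros Gm' G' HG [[Hin HA'] [_ HB']]. now apply up_orL with A B.
  - split; split; try now left.
    + now apply (uprov_weak_mid _ _ _ [A]).
    + now apply (uprov_weak_mid _ _ _ [B]).
Qed.

Ltac solve_fresh := simpl in *; rewrite ?in_app_iff in *; tauto.

(* Without existential right rules, no term can capture the eigenvariable. *)
Lemma uprov_exL_adm o B c Gm G :
  ~ In c (ctx_syms (Ex B :: G :: Gm)) ->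
  uprov o false true (inst B (cst c) :: Gm) G -> uprov o false true (Ex B :: Gm) G.
Proof.
  intros Hc H.
  apply (uprov_of_right_invertible o false (fun Gm G =>
    In (Ex B) Gm /\ ~ In c (ctx_syms (B :: G :: Gm)) /\
    uprov o false true (inst B (cst c) :: Gm) G)).
  - split.
    + intros Gm' A1 A2 (Hin & Hc' & H'). apply uprov_inv_and in H'.
      repeat split; try tauto; solve_fresh.
    + intros Gm' A1 A2 (Hin & Hc' & H'). apply uprov_inv_imp in H'.
      repeat split; [now right|solve_fresh|].
      apply uprov_perm with (1 := H'). apply perm_swap.
    + intros Gm' B' (Hin & Hc' & H'). destruct (uprov_inv_all _ _ _ _ H') as [L HL].
      exists (c :: L). intros x Hx. split; [exact Hin|split].
      * simpl in *; rewrite !in_app_iff in *. intros [Hy|[Hy|Hy]]; auto.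
        destruct (form_syms_inst_cst _ _ _ Hy) as [Hy'|<-]; auto.
      * apply HL. intros Hin'; apply Hx; now right.
    + intros Gm' A1 A2 (Hin & Hc' & H'). apply uprov_inv_or in H'.
      destruct H' as [H'|[Ho [H'|H']]]; [left|right|right]; repeat split; auto; solve_fresh.
    + intros Gm' B' (Hin & Hc' & H'). apply uprov_inv_ex in H'.
      destruct H' as [H'|[? _]]; [left|discriminate]. repeat split; auto; solve_fresh.
  - intros Gm' G' HG (Hin & Hc' & H'). now apply uprov_exL_fresh with B c.
  - repeat split; [now left|solve_fresh|].
    now apply (uprov_weak_mid _ _ _ [inst B (cst c)]).
Qed.

(** * From I-proofs to the uniform calculus *)

Definition rule_allowed (o e : bool) (k : rule_kind) : Prop :=
  match k with
  | ROrR => o = true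
  | RExR => e = true
  | ROrL => o = false /\ e = false
  | RExL => e = false
  | _ => True
  end.

Lemma not_occ_seq_perm c Gs Fs X :
  ~ occ_seq c (Gs, [Fs]) -> Permutation Gs X -> ~ In c (ctx_syms (Fs :: X)).
Proof.
  rewrite occ_seq_syms. simpl. rewrite !in_app_iff. intros Hc HP [H|H]; apply Hc.
  - right; now left.
  - left. apply ctx_syms_perm with X; auto. now symmetry.
Qed.

Ltac normalize_seq_eq :=
  unfold seq_eq in *; simpl in *;
  repeat match goal with
  | H : _ /\ _ |- _ => destruct H
  | H : Permutation [_] _ |- _ => apply Permutation_length_1_inv in H
  | H : ?D = [_] |- _ => is_var D; subst D
  | H : _ :: _ = [_] |- _ => inversion H; clear H; subst
  | H : [] ++ _ = _ |- _ => simpl in H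
  end.

Ltac perm_ctx :=
  repeat match goal with
  | HP : Permutation ?Gm _, H : uprov _ _ _ ?Gm _ |- _ =>
      apply (fun h => uprov_perm _ _ _ _ _ _ h HP) in H
  | HP : Permutation ?Gm ?X |- uprov _ _ _ ?Gm _ =>
      apply (uprov_perm _ _ _ X); [|now symmetry]
  end.

Lemma uprov_of_step1 o e k Gp Fp Gs Fs :
  rule_allowed o e k -> step1 k (Gp, [Fp]) (Gs, [Fs]) ->
  uprov o e true Gp Fp -> uprov o e true Gs Fs.
Proof.
  intros Hk Hs H. destruct k; simpl in Hk, Hs; try contradiction.
  - destruct Hs as (B & G0 & D & Hs). normalize_seq_eq. perm_ctx.
    apply (uprov_incl _ _ _ _ _ H). intros X. simpl. tauto.
  - (* contraction on the right needs two succedent formulas *)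
    destruct Hs as (B & G0 & D & Hs). normalize_seq_eq.
  - destruct Hs as (E & G0 & D & Hs). normalize_seq_eq. perm_ctx. apply up_botR; auto.
  - destruct Hs as (B & E & G0 & D & [Hp|Hp] & Hc); normalize_seq_eq; perm_ctx.
    + now apply uprov_andL1_adm.
    + now apply uprov_andL2_adm.
  - destruct Hs as (B & E & G0 & D & [Hp|Hp] & Hc); normalize_seq_eq; perm_ctx.
    + now apply up_orR1.
    + now apply up_orR2.
  - destruct Hs as (B & E & G0 & D & Hs). normalize_seq_eq. perm_ctx. now apply up_impR.
  - destruct Hs as (B & t & G0 & D & Ht & Hs). normalize_seq_eq. perm_ctx.
    now apply uprov_allL_adm with t.
  - destruct Hs as (B & t & G0 & D & Ht & Hs). normalize_seq_eq. perm_ctx.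
    now apply up_exR with t.
  - destruct Hs as (B & c & G0 & D & Hf & Hs). normalize_seq_eq.
    pose proof (not_occ_seq_perm _ _ _ _ Hf ltac:(eassumption)) as Hc.
    perm_ctx. apply uprov_exL_adm with c; auto. solve_fresh.
  - destruct Hs as (B & c & G0 & D & Hf & Hs). normalize_seq_eq.
    pose proof (not_occ_seq_perm _ _ _ _ Hf ltac:(eassumption)) as Hc.
    perm_ctx. now apply uprov_allR_fresh with c.
Qed.

Lemma uprov_of_step2 o e k Gp1 Fp1 Gp2 Fp2 Gs Fs :
  rule_allowed o e k -> step2 k (Gp1, [Fp1]) (Gp2, [Fp2]) (Gs, [Fs]) ->
  uprov o e true Gp1 Fp1 -> uprov o e true Gp2 Fp2 -> uprov o e true Gs Fs.
Proof.
  intros Hk Hs H1 H2. destruct k; simpl in Hk, Hs; try contradiction.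
  - destruct Hk as [-> ->]. destruct Hs as (B & E & G0 & D & Hs).
    normalize_seq_eq. perm_ctx. now apply uprov_orL_adm.
  - destruct Hs as (B & E & G0 & D & Hs). normalize_seq_eq. perm_ctx. now apply up_andR.
  - destruct Hs as (B & E & G0 & D & T & Hs). normalize_seq_eq. perm_ctx.
    now apply uprov_impL_adm.
Qed.

Lemma all_seqs_root (P : sequent -> Prop) p : all_seqs P p -> P (root p).
Proof. destruct p; simpl; tauto. Qed.

Lemma uprov_of_I_proof o e p Gm G :
  C_proof p -> all_seqs single_succ p -> (forall k, uses k p -> rule_allowed o e k) ->
  root p = (Gm, [G]) -> uprov o e true Gm G.
Proof.
  revert Gm G.
  induction p as [s|k s q IH|k s q1 IH1 q2 IH2]; simpl; intros Gm G HC HS Hk Hr; subst s.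
  - destruct HC as [[HT|[]]|(A & HA & Hin & [<-|[]])]; simpl in *.
    + subst. apply up_top.
    + now apply up_ax.
  - destruct HC as [Hst HC], HS as [_ HS].
    destruct (all_seqs_root _ _ HS) as [F HF].
    destruct (root q) as [Gq Dq] eqn:Hq. simpl in HF. subst Dq.
    apply uprov_of_step1 with k Gq F; auto.
  - destruct HC as (Hst & HC1 & HC2), HS as (_ & HS1 & HS2).
    destruct (all_seqs_root _ _ HS1) as [F1 HF1], (all_seqs_root _ _ HS2) as [F2 HF2].
    destruct (root q1) as [G1 D1] eqn:Hq1, (root q2) as [G2 D2] eqn:Hq2.
    simpl in HF1, HF2. subst D1 D2.
    apply uprov_of_step2 with k G1 F1 G2 F2; auto.
Qed.

(** * Uniform proofs *)

Lemma uprov_botR_adm Gm G : uprov true true false Gm Bot -> uprov true true false Gm G.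
Proof.
  revert Gm. induction G as [G IH] using (induction_ltof1 _ fsize); unfold ltof in IH.
  intros Gm H. destruct G.
  - apply up_botR; [right; right; exact I|exact H].
  - apply up_top.
  - exact H.
  - apply up_andR; apply IH; simpl; auto; lia.
  - apply up_orR1; auto. apply IH; simpl; auto; lia.
  - apply up_impR, IH; [simpl; lia|]. now apply uprov_weak.
  - apply up_allR with []. intros x _. apply IH; auto. rewrite fsize_inst; simpl; lia.
  - apply up_exR with (cst 0); [reflexivity|exact I|].
    apply IH; auto. rewrite fsize_inst; simpl; lia.
Qed.

Lemma uprov_without_botR o e Gm G : uprov o e true Gm G -> uprov true true false Gm G.
Proof.
  induction 1.
  - apply up_top.
  - now apply up_ax.
  - now apply uprov_botR_adm.
  - now apply up_andR.
  - now apply up_orR1.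
  - now apply up_orR2.
  - now apply up_impR.
  - now apply up_allR with L.
  - now apply up_exR with t.
  - now apply up_andL1 with A B.
  - now apply up_andL2 with A B.
  - now apply up_orL with A B.
  - now apply up_impL with A B.
  - now apply up_allL with B t.
  - now apply up_exL with B L.
Qed.

Definition O_derivable (s : sequent) : Prop := exists p, O_proof p /\ root p = s.

Lemma seq_eq_refl s : seq_eq s s.
Proof. split; apply Permutation_refl. Qed.

Lemma uniform_ok_atomic r Gm G : atomic_or_bot G -> uniform_ok r (Gm, [G]).
Proof. intros [->|HG]; [exact I|destruct G; simpl in *; tauto]. Qed.

Lemma O_derivable_axiom s : axiom s -> single_succ s -> uniform_ok None s -> O_derivable s.
Proof. intros. exists (Leaf s). repeat split; auto. Qed.

Lemma O_derivable_step1 k p s :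
  O_derivable p -> step1 k p s -> single_succ s -> uniform_ok (Some k) s -> O_derivable s.
Proof.
  intros (q & [[HC HS] HU] & <-) Hs H1 H2. exists (Un k s q). repeat split; auto.
Qed.

Lemma O_derivable_step2 k p1 p2 s :
  O_derivable p1 -> O_derivable p2 -> step2 k p1 p2 s -> single_succ s ->
  uniform_ok (Some k) s -> O_derivable s.
Proof.
  intros (q1 & [[HC1 HS1] HU1] & <-) (q2 & [[HC2 HS2] HU2] & <-) Hs H1 H2.
  exists (Bin k s q1 q2). repeat split; auto.
Qed.

Lemma O_derivable_contr P Gm G :
  atomic_or_bot G -> In P Gm -> O_derivable (P :: Gm, [G]) -> O_derivable (Gm, [G]).
Proof.
  intros HG Hin H. destruct (in_split _ _ Hin) as (l1 & l2 & ->).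
  apply O_derivable_step1 with RContrL (P :: l1 ++ P :: l2, [G]); auto.
  - exists P, (l1 ++ l2), [G]. split; split; simpl; auto; rewrite <- Permutation_middle; auto.
  - now exists G.
  - now apply uniform_ok_atomic.
Qed.

Lemma O_derivable_left1 k P A Gm G :
  atomic_or_bot G -> In P Gm -> step1 k (A :: Gm, [G]) (P :: Gm, [G]) ->
  O_derivable (A :: Gm, [G]) -> O_derivable (Gm, [G]).
Proof.
  intros HG Hin Hs H. apply O_derivable_contr with P; auto.
  apply O_derivable_step1 with k (A :: Gm, [G]); auto using uniform_ok_atomic.
  now exists G.
Qed.

Lemma O_derivable_of_uprov Gm G : uprov true true false Gm G -> O_derivable (Gm, [G]).
Proof.
  assert (Hss : forall Gm' G', single_succ (Gm', [G'])) by (intros Gm' G'; now exists G').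
  induction 1.
  - apply O_derivable_axiom; [left; now left|auto|reflexivity].
  - apply O_derivable_axiom; auto using uniform_ok_atomic. right; exists A; simpl; auto.
  - destruct H as [H|H]; [discriminate|].
    apply O_derivable_step1 with RBotR (Gm, [Bot]); auto using uniform_ok_atomic.
    exists A, Gm, []. split; apply seq_eq_refl.
  - apply O_derivable_step2 with RAndR (Gm, [A]) (Gm, [B]); auto; try reflexivity.
    exists A, B, Gm, []. repeat split; apply seq_eq_refl.
  - apply O_derivable_step1 with ROrR (Gm, [A]); auto; try reflexivity.
    exists A, B, Gm, []. split; [left|]; apply seq_eq_refl.
  - apply O_derivable_step1 with ROrR (Gm, [B]); auto; try reflexivity.
    exists A, B, Gm, []. split; [right|]; apply seq_eq_refl.
  - apply O_derivable_step1 with RImpR (A :: Gm, [B]); auto; try reflexivity.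
    exists A, B, Gm, []. split; apply seq_eq_refl.
  - destruct (fresh_nat (L ++ ctx_syms (All B :: Gm))) as [c Hc]. rewrite in_app_iff in Hc.
    apply O_derivable_step1 with RAllR (Gm, [inst B (cst c)]); auto; try reflexivity.
    exists B, c, Gm, []. repeat split; try apply seq_eq_refl.
    rewrite occ_seq_syms. solve_fresh.
  - apply O_derivable_step1 with RExR (Gm, [inst B t]); auto; try reflexivity.
    exists B, t, Gm, []. repeat split; auto; apply seq_eq_refl.
  - apply O_derivable_left1 with RAndL (And A B) A; auto.
    exists A, B, Gm, [G]. split; [left|]; apply seq_eq_refl.
  - apply O_derivable_left1 with RAndL (And A B) B; auto.
    exists A, B, Gm, [G]. split; [right|]; apply seq_eq_refl.
  - apply O_derivable_contr with (Or A B); auto.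
    apply O_derivable_step2 with ROrL (A :: Gm, [G]) (B :: Gm, [G]); auto using uniform_ok_atomic.
    exists A, B, Gm, [G]. repeat split; apply seq_eq_refl.
  - apply O_derivable_contr with (Imp A B); auto.
    apply O_derivable_step2 with RImpL (Gm, [A]) (B :: Gm, [G]); auto using uniform_ok_atomic.
    exists A, B, Gm, [], [G]. repeat split; apply seq_eq_refl.
  - apply O_derivable_left1 with RAllL (All B) (inst B t); auto.
    exists B, t, Gm, [G]. repeat split; auto; apply seq_eq_refl.
  - destruct (fresh_nat (L ++ ctx_syms (G :: Ex B :: Gm))) as [c Hc]. rewrite in_app_iff in Hc.
    apply O_derivable_left1 with RExL (Ex B) (inst B (cst c)); auto.
    exists B, c, Gm, [G]. repeat split; try apply seq_eq_refl.
    rewrite occ_seq_syms. solve_fresh.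
Qed.

Lemma allowed_flags p :
  (~ uses ROrL p \/ (~ uses ROrR p /\ ~ uses RExR p)) -> (~ uses RExL p \/ ~ uses RExR p) ->
  exists o e, forall k, uses k p -> rule_allowed o e k.
Proof.
  intros [HoL|[HoR HeR]] HE.
  - destruct HE as [HeL|HeR]; [exists true, true|exists true, false];
      intros [] Hu; simpl; tauto.
  - exists false, false. intros [] Hu; simpl; tauto.
Qed.

Lemma has_uniform_proof_of_I_proof p Gam G :
  I_proof p -> root p = (Gam, [G]) ->
  (~ uses ROrL p \/ (~ uses ROrR p /\ ~ uses RExR p)) -> (~ uses RExL p \/ ~ uses RExR p) ->
  has_uniform_proof Gam G.
Proof.
  intros [HC HS] Hr H1 H2. destruct (allowed_flags p H1 H2) as (o & e & Hk).
  apply O_derivable_of_uprov, uprov_without_botR with o e, uprov_of_I_proof with p; auto.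
Qed.

(** * Sequents without uniform proofs *)

Lemma no_C_proof (Inv : sequent -> Prop) :
  (forall s, axiom s -> ~ Inv s) ->
  (forall k p s, step1 k p s -> Inv s -> Inv p) ->
  (forall k p1 p2 s, step2 k p1 p2 s -> Inv s -> Inv p1 \/ Inv p2) ->
  forall p, C_proof p -> ~ Inv (root p).
Proof.
  intros Hax H1 H2.
  induction p as [s|k s q IH|k s q1 IH1 q2 IH2]; simpl; intros HC HI.
  - exact (Hax s HC HI).
  - destruct HC as [Hs HC]. exact (IH HC (H1 _ _ _ Hs HI)).
  - destruct HC as (Hs & HC1 & HC2). destruct (H2 _ _ _ _ Hs HI); [apply IH1|apply IH2]; auto.
Qed.

Definition sided (L R : form -> Prop) (s : sequent) : Prop :=
  Forall L (fst s) /\ Forall R (snd s).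

Lemma sided_seq_eq L R s s' : seq_eq s s' -> sided L R s <-> sided L R s'.
Proof.
  intros [H1 H2]. unfold sided.
  split; intros [HL HR]; split; (eapply Permutation_Forall; [|eassumption]);
    auto using Permutation_sym.
Qed.

Ltac sided_normalize :=
  repeat match goal with
  | H : exists _, _ |- _ => destruct H
  | H : _ /\ _ |- _ => destruct H
  | H : seq_eq _ _ \/ seq_eq _ _ |- _ => destruct H
  end;
  repeat match goal with
  | H : seq_eq ?s _, Hs : sided _ _ ?s |- _ => rewrite (sided_seq_eq _ _ _ _ H) in Hs
  | H : seq_eq ?s _ |- context [sided _ _ ?s] => rewrite (sided_seq_eq _ _ _ _ H)
  end;
  unfold sided in *; simpl in *; rewrite ?Forall_cons_iff, ?Forall_app in *; simpl in *.

Fixpoint qfree (A : form) : Prop :=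
  match A with
  | And B E | Or B E | Imp B E => qfree B /\ qfree E
  | All _ | Ex _ => False
  | _ => True
  end.

Fixpoint holds (v : nat -> list term -> Prop) (A : form) : Prop :=
  match A with
  | Atom p l => v p l
  | Top => True
  | Bot => False
  | And B E => holds v B /\ holds v E
  | Or B E => holds v B \/ holds v E
  | Imp B E => holds v B -> holds v E
  | All _ | Ex _ => False
  end.

Definition refutes (v : nat -> list term -> Prop) : sequent -> Prop :=
  sided (fun A => qfree A /\ holds v A) (fun A => qfree A /\ ~ holds v A).

Lemma refutes_axiom v s : axiom s -> ~ refutes v s.
Proof.
  intros [HT|(A & _ & H1 & H2)] [HL HR]; rewrite Forall_forall in HL, HR.
  - now apply (HR _ HT).
  - now apply (HR _ H2), HL.
Qed.

Lemma refutes_step1 v k p s : step1 k p s -> refutes v s -> refutes v p.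
Proof.
  unfold refutes. destruct k; simpl; try contradiction; intros Hs Hc;
    sided_normalize; tauto.
Qed.

Lemma refutes_step2 v k p1 p2 s :
  step2 k p1 p2 s -> refutes v s -> refutes v p1 \/ refutes v p2.
Proof.
  unfold refutes. destruct k; simpl; try contradiction; intros Hs Hc;
    sided_normalize; tauto.
Qed.

Lemma refutes_no_C_proof v p : C_proof p -> ~ refutes v (root p).
Proof. apply no_C_proof; [apply refutes_axiom|apply refutes_step1|apply refutes_step2]. Qed.

Definition Pat (u : term) : form := Atom 0 [u].
Definition exP : form := Ex (Atom 0 [TVar 0]).

(* An eigenvariable introduced for [exP] is fresh for [t], so [Pat t] never
   reaches the antecedent while it is still in the succedent. *)
Definition exP_stuck (t : term) (s : sequent) : Prop :=
  sided (fun A => A = exP \/ exists u, A = Pat u) (fun A => A = Bot \/ A = Pat t) s /\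
  ~ (In (Pat t) (fst s) /\ In (Pat t) (snd s)).

Lemma exP_stuck_seq_eq t s s' : seq_eq s s' -> exP_stuck t s <-> exP_stuck t s'.
Proof.
  intros Hs. unfold exP_stuck. rewrite (sided_seq_eq _ _ _ _ Hs).
  destruct Hs as [H1 H2].
  split; intros [HS Hn]; split; auto; intros [Ha Hb]; apply Hn;
    split; eauto using Permutation_in, Permutation_sym.
Qed.

Lemma exP_stuck_axiom t s : axiom s -> ~ exP_stuck t s.
Proof.
  intros [HT|(A & _ & H1 & H2)] [[HL HR] Hn]; rewrite Forall_forall in HL, HR.
  - destruct (HR _ HT); discriminate.
  - destruct (HR _ H2) as [HA|HA]; subst A; [|tauto].
    destruct (HL _ H1) as [H|[u H]]; discriminate.
Qed.

Ltac exP_shape :=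
  match goal with
  | H : _ = exP \/ exists u, _ = Pat u |- _ =>
      let u := fresh "u" in destruct H as [H|[u H]]; discriminate H
  | H : _ = Bot \/ _ = Pat _ |- _ => destruct H as [H|H]; discriminate H
  end.

Ltac exP_stuck_normalize :=
  repeat match goal with
  | H : exists _, _ |- _ => destruct H
  | H : _ /\ _ |- _ => destruct H
  | H : seq_eq _ _ \/ seq_eq _ _ |- _ => destruct H
  end;
  repeat match goal with
  | H : seq_eq ?s _, Hs : exP_stuck _ ?s |- _ => rewrite (exP_stuck_seq_eq _ _ _ H) in Hs
  | H : seq_eq ?s _ |- exP_stuck _ ?s => rewrite (exP_stuck_seq_eq _ _ _ H)
  end;
  unfold exP_stuck, sided in *; simpl in *; rewrite ?Forall_cons_iff in *;
  repeat match goal with H : _ /\ _ |- _ => destruct H end.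

Lemma exP_stuck_step1 t k p s : step1 k p s -> exP_stuck t s -> exP_stuck t p.
Proof.
  intros Hs Hc. destruct k; simpl in Hs; try contradiction.
  9: {
    destruct Hs as (B & c & G0 & D & Hf & Hp & Hcs).
    assert (HD : Permutation (snd s) D) by apply Hcs.
    exP_stuck_normalize.
    assert (HB : B = Atom 0 [TVar 0]).
    { match goal with H : Ex B = exP \/ _ |- _ =>
        destruct H as [H|[u H]]; [now injection H|discriminate H] end. }
    subst B. simpl.
    split; [repeat split; auto; right; eexists; reflexivity|].
    intros [[Heq|Hin] Hin']; [injection Heq as <-|tauto].
    apply Hf. right. apply Exists_exists. exists (Pat (cst c)). split.
    - apply Permutation_in with D; auto. now symmetry.
    - simpl; auto. }
  all: exP_stuck_normalize; try exP_shape; intuition discriminate.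
Qed.

Lemma exP_stuck_step2 t k p1 p2 s :
  step2 k p1 p2 s -> exP_stuck t s -> exP_stuck t p1 \/ exP_stuck t p2.
Proof.
  intros Hs Hc. exfalso. destruct k; simpl in Hs; try contradiction;
    exP_stuck_normalize; exP_shape.
Qed.

Lemma exP_stuck_no_C_proof t p : C_proof p -> ~ exP_stuck t (root p).
Proof.
  apply no_C_proof; [apply exP_stuck_axiom|apply exP_stuck_step1|apply exP_stuck_step2].
Qed.

Lemma O_proof_last_rule p k Gm F :
  O_proof p -> root p = (Gm, [F]) ->
  (forall r, uniform_ok r (Gm, [F]) -> r = Some k) -> (forall p1 p2 s, ~ step2 k p1 p2 s) ->
  exists q, step1 k (root q) (Gm, [F]) /\ C_proof q.
Proof.
  intros [[HC _] HU] Hr Hk H2. destruct p as [s|k' s q|k' s q1 q2]; simpl in *; subst s.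
  - discriminate (Hk None HU).
  - destruct HU as [HU _]. apply Hk in HU. injection HU as ->. exists q. tauto.
  - destruct HU as [HU _]. apply Hk in HU. injection HU as ->. now destruct (H2 _ _ _ (proj1 HC)).
Qed.

Lemma axiom_atom A : is_atom A -> axiom ([A], [A]).
Proof. intros HA. right. exists A. simpl; auto. Qed.

Lemma witness_orL_exR : tight_witness ROrL RExR.
Proof.
  set (P1 := Pat (cst 1)). set (P2 := Pat (cst 2)).
  exists [Or P1 P2], exP. split; [repeat constructor|split; [repeat constructor|split]].
  - exists (Bin ROrL ([Or P1 P2], [exP])
              (Un RExR ([P1], [exP]) (Leaf ([P1], [P1])))
              (Un RExR ([P2], [exP]) (Leaf ([P2], [P2])))).
    repeat split; simpl; auto; try apply axiom_atom; try exact I;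
      try (eexists; reflexivity).
    + exists P1, P2, [], [exP]. repeat split; apply Permutation_refl.
    + exists (Atom 0 [TVar 0]), (cst 1), [P1], []. repeat split; apply Permutation_refl.
    + exists (Atom 0 [TVar 0]), (cst 2), [P2], []. repeat split; apply Permutation_refl.
  - intros (p & Hp & Hr).
    destruct (O_proof_last_rule p RExR _ _ Hp Hr) as (q & Hs & HC); [auto|simpl; tauto|].
    destruct Hs as (B & t & G0 & D & Ht & Hq & Hc).
    apply (refutes_no_C_proof (fun _ l => l <> [t]) q HC).
    unfold refutes. rewrite (sided_seq_eq _ _ _ _ Hq). normalize_seq_eq.
    assert (Hv : [cst 1] <> [t] \/ [cst 2] <> [t]).
    { destruct (classic ([cst 1] = [t])) as [Heq|Heq]; [right|now left].
      rewrite <- Heq. discriminate. }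
    repeat (apply Forall_cons || apply Forall_nil || split); simpl; auto.
Qed.

Lemma witness_orL_orR : tight_witness ROrL ROrR.
Proof.
  set (Pa := Atom 0 []). set (Qa := Atom 1 []).
  exists [Or Pa Qa], (Or Qa Pa). split; [repeat constructor|split; [repeat constructor|split]].
  - exists (Bin ROrL ([Or Pa Qa], [Or Qa Pa])
              (Un ROrR ([Pa], [Or Qa Pa]) (Leaf ([Pa], [Pa])))
              (Un ROrR ([Qa], [Or Qa Pa]) (Leaf ([Qa], [Qa])))).
    repeat split; simpl; auto; try apply axiom_atom; try exact I;
      try (eexists; reflexivity).
    + exists Pa, Qa, [], [Or Qa Pa]. repeat split; apply Permutation_refl.
    + exists Qa, Pa, [Pa], []. split; [right|]; apply seq_eq_refl.
    + exists Qa, Pa, [Qa], []. split; [left|]; apply seq_eq_refl.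
  - intros (p & Hp & Hr).
    destruct (O_proof_last_rule p ROrR _ _ Hp Hr) as (q & Hs & HC); [auto|simpl; tauto|].
    destruct Hs as (B & E & G0 & D & [Hq|Hq] & Hc).
    + apply (refutes_no_C_proof (fun n _ => n = 0) q HC).
      unfold refutes. rewrite (sided_seq_eq _ _ _ _ Hq). normalize_seq_eq.
      repeat (apply Forall_cons || apply Forall_nil || split); simpl; auto.
    + apply (refutes_no_C_proof (fun n _ => n = 1) q HC).
      unfold refutes. rewrite (sided_seq_eq _ _ _ _ Hq). normalize_seq_eq.
      repeat (apply Forall_cons || apply Forall_nil || split); simpl; auto.
Qed.

Lemma witness_exL_exR : tight_witness RExL RExR.
Proof.
  set (P0 := Pat (cst 0)).
  exists [exP], exP. split; [repeat constructor|split; [repeat constructor|split]].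
  - exists (Un RExL ([exP], [exP])
              (Un RExR ([P0], [exP]) (Leaf ([P0], [P0])))).
    repeat split; simpl; auto; try apply axiom_atom; try exact I;
      try (eexists; reflexivity).
    + exists (Atom 0 [TVar 0]), 0, [], [exP]. repeat split; try apply Permutation_refl.
      rewrite occ_seq_syms. simpl. tauto.
    + exists (Atom 0 [TVar 0]), (cst 0), [P0], []. repeat split; apply Permutation_refl.
  - intros (p & Hp & Hr).
    destruct (O_proof_last_rule p RExR _ _ Hp Hr) as (q & Hs & HC); [auto|simpl; tauto|].
    destruct Hs as (B & t & G0 & D & Ht & Hq & Hc).
    apply (exP_stuck_no_C_proof t q HC).
    rewrite (exP_stuck_seq_eq _ _ _ Hq). normalize_seq_eq.
    unfold exP_stuck, sided; simpl. repeat split; auto.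
    intros [[H|[]] _]. discriminate.
Qed.

Theorem theorem8 :
  (forall (Gam : list form) (G : form),
     Forall wf_form Gam -> wf_form G ->
     (exists p, I_proof p /\ root p = (Gam, [G]) /\
        (~ uses ROrL p \/ (~ uses ROrR p /\ ~ uses RExR p)) /\
        (~ uses RExL p \/ ~ uses RExR p)) ->
     has_uniform_proof Gam G)
  /\ tight_witness ROrL RExR
  /\ tight_witness ROrL ROrR
  /\ tight_witness RExL RExR.
Proof.
  split; [|split; [exact witness_orL_exR|split; [exact witness_orL_orR|exact witness_exL_exR]]].
  intros Gam G _ _ (p & Hp & Hr & Hor & Hex).
  exact (has_uniform_proof_of_I_proof p Gam G Hp Hr Hor Hex).
Qed.
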